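(* Let $\mathcal{A}$ be a commutative integral domain with unit and of characteristic zero, and let $\mathcal{X}$ be a nonzero locally nilpotent derivation of $\mathcal{A}$. Let $s\in\mathcal{A}$ be a local slice of $\mathcal{X}$, put $c=\mathcal{X}(s)$, and let $p,c_1\in\mathcal{A}$ be such that $c=pc_1$. Then there exists $s_1\in\mathcal{A}$ with $\mathcal{X}(s_1)=c_1$ if and only if the ideal $p\mathcal{A}$ contains an element of the form $s+a$ with $a\in\mathcal{A}^{\mathcal{X}}$.
   Context: A derivation $\mathcal{X}$ of $\mathcal{A}$ is locally nilpotent if for every $a\in\mathcal{A}$ there is $n\ge1$ with $\mathcal{X}^n(a)=0$. The ring of constants is $\mathcal{A}^{\mathcal{X}}=\{a\in\mathcal{A}:\mathcal{X}(a)=0\}$. An element $s\in\mathcal{A}$ is a local slice of $\mathcal{X}$ if $\mathcal{X}(s)\neq0$ and $\mathcal{X}^2(s)=0$. *)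

From mathcomp Require Import all_boot all_order all_algebra.
Set Implicit Arguments. Unset Strict Implicit. Unset Printing Implicit Defensive.
Import GRing.Theory.
Local Open Scope ring_scope.

Definition is_derivation (A : comNzRingType) (D : A -> A) : Prop :=
  (forall x y : A, D (x + y) = D x + D y) /\
  (forall x y : A, D (x * y) = x * D y + D x * y).

Definition locally_nilpotent (A : comNzRingType) (D : A -> A) : Prop :=
  forall a : A, exists n : nat, (1 <= n)%N /\ iter n D a = 0.

Definition constants (A : comNzRingType) (D : A -> A) : pred A :=
  fun a => D a == 0.

Definition local_slice (A : comNzRingType) (D : A -> A) (s : A) : Prop :=
  D s <> 0 /\ D (D s) = 0.

From mathcomp Require Import all_boot all_order all_algebra.
Local Open Scope ring_scope.
Import GRing.Theory.

(* The kernel of a locally nilpotent derivation of a domain of characteristic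
   zero is factorially closed (compare top iterates in the Leibniz formula), so
   [X p = 0] follows from [X (p * c1) = X (X s) = 0].  Then a solution of
   [X s1 = c1] gives the constant [p * s1 - s], and conversely [s + a = p * b]
   gives [p * X b = X s = p * c1]. *)

Set Implicit Arguments.
Unset Strict Implicit.

Section Derivation.
Variables (A : comNzRingType) (X : A -> A).
Hypothesis derX : is_derivation X.

Lemma derivationD (x y : A) : X (x + y) = X x + X y.
Proof. exact: derX.1. Qed.

Lemma derivationM (x y : A) : X (x * y) = x * X y + X x * y.
Proof. exact: derX.2. Qed.

Lemma derivation0 : X 0 = 0.
Proof. by have /eqP := derivationD 0 0; rewrite addr0 -subr_eq subrr eq_sym => /eqP. Qed.

Lemma derivationN (x : A) : X (- x) = - X x.
Proof. by apply/eqP; rewrite -addr_eq0 -derivationD addNr derivation0. Qed.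

Lemma derivationB (x y : A) : X (x - y) = X x - X y.
Proof. by rewrite derivationD derivationN. Qed.

Lemma derivationMn (x : A) (k : nat) : X (x *+ k) = X x *+ k.
Proof. by elim: k => [|k IHk]; rewrite ?derivation0 // !mulrS derivationD IHk. Qed.

Lemma derivation_sum (I : Type) (r : seq I) (P : pred I) (F : I -> A) :
  X (\sum_(i <- r | P i) F i) = \sum_(i <- r | P i) X (F i).
Proof. exact: (big_morph X derivationD derivation0). Qed.

Lemma derivationMl (c x : A) : X c = 0 -> X (c * x) = c * X x.
Proof. by move=> Xc; rewrite derivationM Xc mul0r addr0. Qed.

Lemma iter_derivation0 (k : nat) : iter k X 0 = 0.
Proof. by elim: k => //= k ->; exact: derivation0. Qed.

Lemma iter_derivation_eq0 (m k : nat) (x : A) :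
  iter m X x = 0 -> (m <= k)%N -> iter k X x = 0.
Proof. by move=> xm /subnK <-; rewrite iterD xm iter_derivation0. Qed.

Lemma iter_derivationM (n : nat) (x y : A) :
  iter n X (x * y) =
  \sum_(i < n.+1) (iter i X x * iter (n - i) X y) *+ 'C(n, i).
Proof.
elim: n => [|n IHn]; first by rewrite big_ord1 subnn.
rewrite iterS IHn derivation_sum.
under eq_bigr => i _ do rewrite derivationMn derivationM mulrnDl.
rewrite big_split /= [RHS]big_ord_recl /= bin0.
under [S in _ = _ + S]eq_bigr => i _ do rewrite /bump /= add0n add1n binS mulrnDr.
rewrite big_split /= addrA; congr (_ + _).
rewrite big_ord_recl big_ord_recr /= subn0 bin0 (bin_small (ltnSn n)) mulr0n.
rewrite addr0; congr (_ + _); apply: eq_bigr => i _.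
by rewrite /bump /= add0n add1n -[X (iter _ X y)]iterS -subSn.
Qed.

Lemma iter_derivationM_top (m n : nat) (x y : A) :
  iter m.+1 X x = 0 -> iter n.+1 X y = 0 ->
  iter (m + n) X (x * y) = (iter m X x * iter n X y) *+ 'C(m + n, m).
Proof.
move=> xm yn; rewrite iter_derivationM (bigD1 (Ordinal (leq_addr n m.+1))) //=.
rewrite addKn big1 ?addr0 // => i /eqP/val_eqP /= i_neq_m.
case: (ltngtP i m) i_neq_m => // [i_lt_m | m_lt_i] _.
  by rewrite (iter_derivation_eq0 yn) ?mulr0 ?mul0rn // ltn_subRL ltn_add2r.
by rewrite (iter_derivation_eq0 xm m_lt_i) mul0r mul0rn.
Qed.

End Derivation.

Section LocallyNilpotentDerivation.
Variables (A : idomainType) (X : A -> A).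
Hypotheses (char0 : [pchar A] =i pred0) (derX : is_derivation X)
  (lndX : locally_nilpotent X).

Lemma locally_nilpotent_last_iterate (x : A) :
  x != 0 -> exists m, iter m X x != 0 /\ iter m.+1 X x = 0.
Proof.
move=> x_neq0.
have ex_zero : exists k, iter k X x == 0.
  by have [k [_ /eqP xk]] := lndX x; exists k.
case: (ex_minnP ex_zero) => -[|m] /eqP xk minimal; first by rewrite -xk eqxx in x_neq0.
by exists m; split=> //; apply/eqP => /eqP/minimal; rewrite ltnn.
Qed.

(* With [m], [n] the orders of [x], [y], the [(m + n)]-th iterate of [x * y] is
   ['C(m + n, m)] times a nonzero product, hence nonzero in characteristic zero;
   if [x * y] is a constant this forces [m + n = 0]. *)
Lemma derivation_const_factor (x y : A) :
  y != 0 -> X (x * y) = 0 -> X x = 0.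
Proof.
move=> y_neq0 Xxy; have [->|x_neq0] := eqVneq x 0; first exact: derivation0.
have [m [xm_neq0 xm]] := locally_nilpotent_last_iterate x_neq0.
have [n [yn_neq0 yn]] := locally_nilpotent_last_iterate y_neq0.
have top := iter_derivationM_top derX xm yn.
have top_neq0 : iter (m + n) X (x * y) != 0.
  rewrite top -mulr_natr !mulf_neq0 //.
  by move/pcharf0P: char0 => ->; rewrite -lt0n bin_gt0 leq_addr.
case: m {xm_neq0 top} xm top_neq0 => [|m] // _.
by rewrite (iter_derivation_eq0 derX (m := 1) Xxy) ?eqxx // addSn.
Qed.

End LocallyNilpotentDerivation.

Theorem lemma3p2 (A : idomainType) (X : A -> A)
  (hchar : [pchar A] =i pred0)
  (hder : is_derivation X) (hlnd : locally_nilpotent X)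
  (hnz : exists a : A, X a <> 0)
  (s : A) (hs : local_slice X s)
  (p c1 : A) (hc : X s = p * c1) :
  (exists s1 : A, X s1 = c1) <->
  (exists a : A, a \in constants X /\ exists b : A, s + a = p * b).
Proof.
have [Xs_neq0 XXs] := hs.
have p_neq0 : p != 0 by apply/eqP => p0; apply: Xs_neq0; rewrite hc p0 mul0r.
have c1_neq0 : c1 != 0 by apply/eqP => c0; apply: Xs_neq0; rewrite hc c0 mulr0.
have Xp : X p = 0 by apply: (derivation_const_factor hchar hder hlnd c1_neq0); rewrite -hc.
split=> [[s1 Xs1] | [a [/eqP Xa [b sa_pb]]]].
  exists (p * s1 - s); split; last by exists s1; rewrite addrC subrK.
  by apply/eqP; rewrite (derivationB hder) (derivationMl hder) // Xs1 hc subrr.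
exists b; apply: (mulfI p_neq0).
by rewrite -(derivationMl hder) // -sa_pb (derivationD hder) Xa addr0 hc.
Qed.
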